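(* Let $k\geq 3$ be an integer. Then every hypomatchable graph $G$ with $|V(G)|\geq 2k+1$ that has no $\{P_{2},P_{2k+1}\}$-factor contains a set $X\subseteq V(G)$ with $|X|\geq 5$ such that $$\sum_{0\leq j\leq k-1} c_{2j+1}(G-X)\geq \frac{1}{k^{2}}|X|.$$ In other words, $\left(\frac{1}{k^{2}},5\right)$ is a $(k,\{P_{2},P_{2k+1}\})$-good pair.
   Context: A graph $H$ is hypomatchable if $H-u$ has a perfect matching for every $u\in V(H)$. For a graph $H$ and $j\geq 1$, $c_{j}(H)$ is the number of components of $H$ with exactly $j$ vertices. For an integer $k\geq 1$ and a set $\mathcal{F}$ of connected graphs with $P_2\in\mathcal{F}$, a pair $(\varepsilon,\lambda)$ with $\varepsilon>0$ real and $\lambda$ a positive integer is called $(k,\mathcal{F})$-good if every hypomatchable graph $G$ of order at least $2k+1$ having no $\mathcal{F}$-factor has a set $X\subseteq V(G)$ with $|X|\geq\lambda$ and $\sum_{0\leq j\leq k-1}c_{2j+1}(G-X)\geq \varepsilon|X|$. An $\mathcal{F}$-factor is a spanning subgraph each of whose components is isomorphic to a member of $\mathcal{F}$. *)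

From mathcomp Require Import all_boot all_order all_algebra.
Set Implicit Arguments. Unset Strict Implicit. Unset Printing Implicit Defensive.

Definition simple_graph (T : finType) (e : rel T) : Prop :=
  symmetric e /\ irreflexive e.

Definition perfect_matching_on (T : finType) (e : rel T) (S : {set T})
    (M : rel T) : Prop :=
  symmetric M /\
  (forall x y, M x y -> [&& x \in S, y \in S & e x y]) /\
  (forall x, x \in S -> #|[set y | M x y]| = 1%N).

Definition hypomatchable (T : finType) (e : rel T) : Prop :=
  forall u : T, exists M : rel T, perfect_matching_on e (~: [set u]) M.

Definition iso_path (T : finType) (H : rel T) (C : {set T}) (n : nat) : Prop :=
  exists f : 'I_n -> T,
    injective f /\ (forall y, y \in C <-> exists i, f i = y) /\
    (forall i j : 'I_n, H (f i) (f j) = ((i.+1 == j) || (j.+1 == i))%N).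

Definition component (T : finType) (H : rel T) (x : T) : {set T} :=
  [set y | connect H x y].

Definition has_P2_P2kp1_factor (T : finType) (e : rel T) (k : nat) : Prop :=
  exists H : rel T,
    symmetric H /\ (forall x y, H x y -> e x y) /\
    (forall x : T, iso_path H (component H x) 2 \/
                   iso_path H (component H x) (2 * k + 1)).

Definition del_rel (T : finType) (e : rel T) (X : {set T}) : rel T :=
  fun x y => [&& x \notin X, y \notin X & e x y].

Definition components_del (T : finType) (e : rel T) (X : {set T})
  : {set {set T}} :=
  [set component (del_rel e X) x | x in ~: X].

Definition c_comp (T : finType) (e : rel T) (X : {set T}) (j : nat) : nat :=
  #|[set C in components_del e X | #|C| == j]|.

From mathcomp Require Import all_boot all_order all_algebra zify.
Import GRing.Theory Num.Theory.
Set Implicit Arguments. Unset Strict Implicit.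

(* If some vertex v has degree at most 2k - 3, then X := N(v) together with
   five further vertices isolates v in G - X, and |X| <= 2k + 3 <= k^2.
   Otherwise fix a vertex u and a perfect matching M of G - u.  Starting from
   u, repeatedly append a neighbour a of the current end that is not yet on
   the path, followed by its M-partner.  The path stays closed under M, so the
   partner is new as well, and the minimum degree 2k - 1 provides a new
   neighbour until the path has 2k + 1 vertices.  This path together with the
   M-edges off it is a {P_2, P_(2k+1)}-factor. *)

Lemma exists_subset_card (T : finType) (A : {set T}) n :
  (n <= #|A|)%N -> exists2 Y : {set T}, Y \subset A & #|Y| = n.
Proof.
move=> leA; exists [set x in take n (enum A)].
  by apply/subsetP => x; rewrite inE => /mem_take; rewrite mem_enum.
rewrite cardsE; move/card_uniqP: (take_uniq n (enum_uniq (mem A))) => ->.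
by rewrite size_takel // -cardE.
Qed.

Lemma exists_neighbour_notin (T : finType) (e : rel T) (s : seq T) b :
  irreflexive e -> uniq s -> b \in s -> (size s <= #|[set w | e b w]|)%N ->
  exists2 a, e b a & a \notin s.
Proof.
move=> irr us bs le_s_deg.
have [/subsetP Ns | /subsetPn[a]] := boolP ([set w | e b w] \subset [set w in s] :\ b).
  have := subset_leq_card (introT subsetP Ns).
  have := cardsD1 b [set w in s]; rewrite inE bs cardsE (card_uniqP us).
  move: le_s_deg; lia.
rewrite !inE => eba; rewrite negb_and negbK => /orP[/eqP ab | ans]; last by exists a.
by rewrite ab irr in eba.
Qed.

Lemma path_index_adj (T : eqType) (e : rel T) x r a b :
  path e x r -> a \in x :: r -> b \in x :: r ->
  (index a (x :: r)).+1 = index b (x :: r) -> e a b.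
Proof.
move=> /(pathP x) exr ain bin ab.
rewrite -(nth_index x ain) -(nth_index x bin) -ab.
by apply: exr; rewrite -ltnS ab index_mem.
Qed.

Lemma connect_closed_sub (T : finType) (H : rel T) (A : {pred T}) x y :
  symmetric H -> (forall a b, a \in A -> H a b -> b \in A) ->
  x \in A -> connect H x y -> y \in A.
Proof.
move=> symH clA xA /(closed_connect (intro_closed (sym_connect_sym symH) _)) <- //.
by move=> a b /clA; apply.
Qed.

Lemma iso_path_component (T : finType) (H : rel T) (s : seq T) x :
  symmetric H -> uniq s -> x \in s ->
  {in s &, forall a b,
     H a b = ((index a s).+1 == index b s) || ((index b s).+1 == index a s)} ->
  (forall a b, a \in s -> H a b -> b \in s) ->
  iso_path H (component H x) (size s).
Proof.
move=> symH us xs Hs clos.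
have conn0 i : (i < size s)%N -> connect H (nth x s 0) (nth x s i).
  elim: i => [|i IH] lti; first exact: connect0.
  have lti' := ltnW lti.
  apply: connect_trans (IH lti') (connect1 _).
  by rewrite Hs ?mem_nth // !index_uniq // eqxx.
have connx a : a \in s -> connect H x a.
  move=> ain; apply: (@connect_trans _ _ (nth x s 0)).
    by rewrite (sym_connect_sym symH) -{2}(nth_index x xs) conn0 ?index_mem.
  by rewrite -(nth_index x ain) conn0 ?index_mem.
exists (fun i : 'I_(size s) => nth x s i); split; [|split].
- by move=> i j /eqP; rewrite nth_uniq // => /eqP /val_inj.
- move=> y; rewrite inE; split => [/(connect_closed_sub symH clos xs) ys | [i <-]].
    by exists (Ordinal (etrans (index_mem y s) ys)); rewrite /= nth_index.
  by apply: connx; rewrite mem_nth.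
- by move=> i j; rewrite Hs ?mem_nth // !index_uniq.
Qed.

Section PerfectMatching.

Variables (T : finType) (e : rel T) (S : {set T}) (M : rel T).
Hypothesis pm : perfect_matching_on e S M.

Lemma matching_sym : symmetric M.
Proof. by case: pm. Qed.

Lemma matching_edge x y : M x y -> [&& x \in S, y \in S & e x y].
Proof. by case: pm => _ [edgeM _]; apply: edgeM. Qed.

Lemma matching_partner_uniq x y z : x \in S -> M x y -> M x z -> y = z.
Proof.
case: pm => _ [_ deg1] xS Mxy Mxz; have /eqP/cards1P[w Nx] := deg1 x xS.
have : y \in [set y | M x y] by rewrite inE.
have : z \in [set y | M x y] by rewrite inE.
by rewrite Nx !inE => /eqP -> /eqP ->.
Qed.

Lemma matching_partner_exists x : x \in S -> exists y, M x y.
Proof.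
case: pm => _ [_ deg1] xS; have /eqP/cards1P[w Nx] := deg1 x xS.
have : w \in [set y | M x y] by rewrite Nx inE.
by rewrite inE; exists w.
Qed.

End PerfectMatching.

Section MatchingClosedPath.

Variables (T : finType) (e : rel T) (u : T) (M : rel T).
Hypotheses (e_sym : symmetric e) (e_irr : irreflexive e).
Hypothesis pm : perfect_matching_on e (~: [set u]) M.

Definition matching_closed (s : seq T) : Prop :=
  {in s, forall x, x != u -> forall y, M x y -> y \in s}.

Lemma matching_closed_partner_notin (s : seq T) x y :
  matching_closed s -> x \notin s -> M x y -> y \notin s.
Proof.
move=> cl xs Mxy; apply: contra xs => ys.
have /and3P[_ yS _] := matching_edge pm Mxy.
by apply: cl ys _ _ _; [rewrite !inE in yS | rewrite (matching_sym pm)].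
Qed.

Lemma matching_closed_path_extend r :
  uniq (u :: r) -> path e u r -> matching_closed (u :: r) ->
  (size (u :: r) <= #|[set w | e (last u r) w]|)%N ->
  exists r', [/\ uniq (u :: r'), path e u r', matching_closed (u :: r')
              & size r' = (size r).+2].
Proof.
move=> ur pr cl deg.
have [a ea ans] := exists_neighbour_notin e_irr ur (mem_last u r) deg.
have aS : a \in ~: [set u].
  by rewrite !inE; apply: contraNneq ans => ->; apply: mem_head.
have [c Mac] := matching_partner_exists pm aS.
have cns := matching_closed_partner_notin cl ans Mac.
have /and3P[_ cS eac] := matching_edge pm Mac.
have ac : a != c by apply: contraTneq eac => ->; rewrite e_irr.
exists (r ++ [:: a; c]); split.
- by rewrite -cat_cons cat_uniq ur /= (negbTE ans) (negbTE cns) inE ac.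
- by rewrite cat_path pr /= ea eac.
- move=> x; rewrite -cat_cons mem_cat => /orP[xr xu y Mxy | xac _ y Mxy].
    by rewrite mem_cat (cl x xr xu y Mxy).
  rewrite mem_cat; apply/orP; right; move: xac; rewrite !inE.
  case/orP => /eqP xE; rewrite {x}xE in Mxy.
    by rewrite (matching_partner_uniq pm aS Mxy Mac) eqxx orbT.
  have Mca : M c a by rewrite (matching_sym pm).
  by rewrite (matching_partner_uniq pm cS Mxy Mca) eqxx.
- by rewrite size_cat addn2.
Qed.

Lemma matching_closed_path_long n :
  (forall v, (2 * n).-1 <= #|[set w | e v w]|)%N ->
  exists r, [/\ uniq (u :: r), path e u r, matching_closed (u :: r)
             & size r = 2 * n].
Proof.
move=> deg; suff: forall t, (t <= n)%N -> exists r,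
    [/\ uniq (u :: r), path e u r, matching_closed (u :: r) & size r = 2 * t].
  by apply.
elim=> [|t IH] le_tn.
  by exists [::]; split=> // x; rewrite inE => ->.
have [r [ur pr cl sr]] := IH (ltnW le_tn).
have [|r' [ur' pr' cl' sr']] := matching_closed_path_extend ur pr cl.
  by apply: leq_trans (deg _); rewrite /= sr; lia.
by exists r'; split; rewrite // sr' sr; lia.
Qed.

Lemma matching_closed_path_factor k r :
  uniq (u :: r) -> path e u r -> matching_closed (u :: r) -> size r = 2 * k ->
  has_P2_P2kp1_factor e k.
Proof.
set s := u :: r => us pr cl sr.
pose adj x y := ((index x s).+1 == index y s) || ((index y s).+1 == index x s).
pose H := [rel x y | [&& x \in s, y \in s & adj x y]
                     || [&& x \notin s, y \notin s & M x y]].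
have Hsym : symmetric H.
  move=> x y; rewrite /= [M x y](matching_sym pm) /adj.
  by congr (_ || _); rewrite andbCA // orbC.
have He x y : H x y -> e x y.
  case/orP=> [/and3P[xs ys /orP[]/eqP adj_xy] | /and3P[_ _ /(matching_edge pm)]].
  - exact: path_index_adj pr xs ys adj_xy.
  - by rewrite e_sym; apply: path_index_adj pr ys xs adj_xy.
  - by case/and3P.
exists H; do 2!split=> //; move=> x; have [xs | xns] := boolP (x \in s).
  right; have -> : (2 * k + 1 = size s)%N by rewrite /= sr addn1.
  apply: iso_path_component => //.
    by move=> a b ain bin; rewrite /= ain bin /= orbF.
  by move=> a b ain /orP[/and3P[] | /and3P[]] //; rewrite ain.
left.
have xS : x \in ~: [set u] by rewrite !inE; apply: contraNneq xns => ->; apply: mem_head.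
have [c Mxc] := matching_partner_exists pm xS.
have cns := matching_closed_partner_notin cl xns Mxc.
have /and3P[_ cS exc] := matching_edge pm Mxc.
have Mcx : M c x by rewrite (matching_sym pm).
have Mirr a : M a a = false by apply: contraFF (e_irr a) => /(matching_edge pm)/and3P[].
have xc : x != c by apply: contraTneq exc => ->; rewrite e_irr.
apply: (@iso_path_component _ _ [:: x; c]) => //; rewrite ?inE ?eqxx //.
- by rewrite /= inE xc.
- move=> a b; rewrite !inE => /orP[]/eqP-> /orP[]/eqP->;
    by rewrite /= ?(negbTE xns) ?(negbTE cns) /= ?eqxx ?(negbTE xc) ?Mirr.
- move=> a b; rewrite !inE => /orP[]/eqP-> /orP[/and3P[] | /and3P[_ _]];
    rewrite ?(negbTE xns) ?(negbTE cns) //.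
  + by move/(matching_partner_uniq pm xS Mxc) ->; rewrite eqxx orbT.
  + by move/(matching_partner_uniq pm cS Mcx) ->; rewrite eqxx.
Qed.

End MatchingClosedPath.

Lemma isolated_component_del (T : finType) (e : rel T) (X : {set T}) v :
  [set w | e v w] \subset X -> component (del_rel e X) v = [set v].
Proof.
move=> /subsetP NX; apply/setP => y; rewrite !inE.
apply/idP/eqP => [/connectP[[|a p] //= /andP[/and3P[_ aX eva] _] _] | ->].
  by rewrite NX ?inE in aX.
exact: connect0.
Qed.

Lemma c_comp1_gt0 (T : finType) (e : rel T) (X : {set T}) v :
  v \notin X -> [set w | e v w] \subset X -> (0 < c_comp e X 1)%N.
Proof.
move=> vX NX; apply/card_gt0P; exists [set v].
rewrite inE cards1 eqxx andbT -(isolated_component_del NX).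
by apply: imset_f; rewrite inE.
Qed.

Lemma low_degree_isolating_set (T : finType) (e : rel T) v :
  irreflexive e -> (5 < #|T|)%N ->
  exists X : {set T}, [/\ (5 <= #|X|)%N, (#|X| <= #|[set w | e v w]| + 5)%N
                       & (0 < c_comp e X 1)%N].
Proof.
move=> e_irr T_gt5.
have [|Y Yv cardY] := @exists_subset_card _ (~: [set v]) 5.
  by rewrite cardsC1; lia.
exists ([set w | e v w] :|: Y); split.
- by rewrite -cardY subset_leq_card ?subsetUr.
- by rewrite -cardY leq_card_setU.
- apply: (@c_comp1_gt0 _ _ _ v); last exact: subsetUl.
  rewrite in_setU inE e_irr /=; apply: contraL isT => /(subsetP Yv).
  by rewrite !inE eqxx.
Qed.

Theorem proposition3p1 (k : nat) (T : finType) (e : rel T) :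
  (3 <= k)%N ->
  simple_graph e ->
  hypomatchable e ->
  (2 * k + 1 <= #|T|)%N ->
  ~ has_P2_P2kp1_factor e k ->
  exists X : {set T},
    (5 <= #|X|)%N /\
    ((#|X|%:R / (k ^ 2)%:R : rat) <= (\sum_(0 <= j < k) c_comp e X (2 * j + 1))%:R)%R.
Proof.
move=> k_ge3 [e_sym e_irr] hypo T_big no_factor.
have [/existsP[v deg_v] | /existsPn high_deg] :=
  boolP [exists v, #|[set w | e v w]| < (2 * k).-1].
  have [|X [X_ge5 X_le c1]] := low_degree_isolating_set v e_irr; first by lia.
  exists X; split=> //.
  rewrite ler_pdivrMr ?ltr0n ?expn_gt0; last by lia.
  rewrite -natrM ler_nat.
  have sum_ge1 : (0 < \sum_(0 <= j < k) c_comp e X (2 * j + 1))%N.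
    by rewrite big_ltn; [apply: leq_trans c1 (leq_addr _ _) | lia].
  have X_le_k2 : (#|X| <= k ^ 2)%N by move: X_le deg_v; nia.
  by rewrite mulnC (leq_trans X_le_k2) // leq_pmulr.
have /card_gt0P[u _] : (0 < #|T|)%N by lia.
have [M pm] := hypo u.
have [|r [ur pr cl sr]] := matching_closed_path_long e_irr pm (n := k).
  by move=> v; rewrite leqNgt high_deg.
by case: no_factor; apply: (matching_closed_path_factor e_sym e_irr pm ur pr cl sr).
Qed.
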